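(* Let $Y$ be a Peano continuum without cut points. For any point $x\in Y$ and any $\epsilon>0$ there is $\delta>0$ such that $Y\setminus B(x,\epsilon)$ is contained in a single component of $Y\setminus B(x,\delta)$.
   Context: A Peano continuum is a compact, connected, locally connected metric space; $B(x,r)$ denotes the open metric ball of radius $r$ about $x$. *)

From HB Require Import structures.
From mathcomp Require Import all_boot all_order all_algebra.
From mathcomp Require Import all_classical all_reals all_analysis.
Set Implicit Arguments. Unset Strict Implicit. Unset Printing Implicit Defensive.
Import Order.TTheory GRing.Theory Num.Theory.
Local Open Scope classical_set_scope.
Local Open Scope ring_scope.

Definition locally_connected {T : topologicalType} :=
  forall (x : T) (U : set T), nbhs x U ->
    exists V : set T, [/\ open V, connected V, V x & V `<=` U].

Definition peano_continuum {R : realType} (T : metricType R) :=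
  [/\ compact [set: T], connected [set: T] & @locally_connected T].

Definition cut_point {T : topologicalType} (x : T) :=
  ~ connected ([set: T] `\ x).

From HB Require Import structures.
From mathcomp Require Import all_boot all_order all_algebra.
From mathcomp Require Import all_classical all_reals all_analysis.
Import Order.TTheory GRing.Theory Num.Theory.
Local Open Scope classical_set_scope.
Local Open Scope ring_scope.

(* Fix a outside B(x, eps) and say that b is linked to a away from x when a
   and b lie in one component of Y \ B(x, r) for some r > 0.  Local
   connectedness makes this relation locally constant on Y \ {x}, which is
   connected since x is not a cut point, so every b <> x is linked to a; the
   same connected neighbourhoods show that a radius working at b also works,
   together with all smaller radii, near b.  Compactness of Y \ B(x, eps)
   turns these local radii into a single delta. *)

Lemma connected_locally_constant {T : topologicalType} {A P : set T} :
  connected A -> (forall z, A z -> \forall w \near z, P w <-> P z) ->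
  forall a, A a -> P a -> A `<=` P.
Proof.
move=> cA Plc a Aa Pa.
have AP : A `&` P = A.
  apply: cA; first by exists a.
  - exists P°; first exact: open_interior.
    apply/seteqP; split=> z [Az Pz]; split => //; last exact: nbhs_singleton.
    by apply: filterS (Plc z Az) => w [_ /(_ Pz)].
  - exists (~` (~` P)°); first by rewrite closedC; exact: open_interior.
    apply/seteqP; split=> z [Az Pz]; split => //; first by move=> /nbhs_singleton.
    apply: contrapT => nPz; apply: Pz; apply: filterS (Plc z Az) => w.
    by move=> [+ _] Pw => /(_ Pw).
by rewrite -AP => z [].
Qed.

Lemma connected_componentS {T : topologicalType} (A B : set T) (a : T) :
  A `<=` B -> connected_component A a `<=` connected_component B a.
Proof.
by move=> AB z [C [Ca CA cC] Cz]; exists C => //; split => //; exact: subset_trans AB.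
Qed.

Section metric_components.
Context {R : realFieldType} {T : metricType R}.
Implicit Types (x z a b w : T) (r s : R) (V : set T).

Lemma open_mball x r : open (ball x r).
Proof.
rewrite openE => y; rewrite ballEmdist /= => xy; rewrite /interior.
have r0 : 0 < r - mdist x y by rewrite subr_gt0.
apply: filterS (nbhsx_ballx y _ r0) => z; rewrite ballEmdist /= => yz.
by apply: le_lt_trans (metric_triangle x y z) _; rewrite -ltrBrDl.
Qed.

Lemma closed_mballC x r : closed (~` ball x r).
Proof. by rewrite closedC; exact: open_mball. Qed.

Lemma ballC_neq {x r b} : 0 < r -> (~` ball x r) b -> b != x.
Proof. by move=> r0 xb; apply/eqP => bx; apply: xb; rewrite bx; exact: ballxx. Qed.

Lemma le_ballC x r s : s <= r -> ~` ball x r `<=` ~` ball x s.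
Proof. by move=> sr; apply: subsetC; exact: le_ball. Qed.

Definition linked_away x a b :=
  exists2 r, 0 < r & connected_component (~` ball x r) a b.

Lemma linked_away_refl {x a} : a != x -> linked_away x a a.
Proof.
move=> ax; exists (mdist x a); first by rewrite mdist_gt0 eq_sym.
by apply: connected_component_refl; rewrite /= ballEmdist /= ltxx.
Qed.

Lemma component_away_glue {x a w r s V} :
  connected_component (~` ball x r) a w -> connected V -> V w ->
  V `<=` ~` ball x s -> V `<=` connected_component (~` ball x (Num.min r s)) a.
Proof.
move=> Arw cV Vw Vs.
have Aw : connected_component (~` ball x (Num.min r s)) a w.
  by apply: connected_componentS Arw; apply: le_ballC; rewrite ge_min lexx.
rewrite (same_connected_component Aw); apply: connected_component_max => //.
by apply: subset_trans Vs _; apply: le_ballC; rewrite ge_min lexx orbT.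
Qed.

Hypothesis lcT : @locally_connected T.

Lemma connected_nbhs_away {x z} : z != x ->
  exists s V, [/\ 0 < s, connected V, nbhs z V & V `<=` ~` ball x s].
Proof.
move=> zx; pose s := mdist z x / 2.
have s0 : 0 < s by rewrite divr_gt0 ?mdist_gt0.
have [V [oV cV Vz Vzs]] := lcT z _ (nbhsx_ballx z _ s0).
exists s, V; split => //; first exact: open_nbhs_nbhs.
move=> w /Vzs zw xw; have := ball_triangle zw (ball_sym xw).
by rewrite -splitr ballEmdist /= ltxx.
Qed.

Lemma linked_away_locally_constant x a z : z != x ->
  \forall w \near z, linked_away x a w <-> linked_away x a z.
Proof.
move=> zx; have [s [V [s0 cV Vz Vs]]] := connected_nbhs_away zx.
have link u v : V u -> V v -> linked_away x a u -> linked_away x a v.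
  move=> Vu Vv [r r0 Aru]; exists (Num.min r s); first by rewrite lt_min r0 s0.
  exact: component_away_glue Aru cV Vu Vs _ Vv.
have Vz' := nbhs_singleton Vz.
by apply: filterS Vz => w Vw; split; apply: link.
Qed.

Lemma linked_away_punctured x a :
  connected [set~ x] -> a != x -> forall b, b != x -> linked_away x a b.
Proof.
move=> cx ax b bx.
have loc z : [set~ x] z -> \forall w \near z, linked_away x a w <-> linked_away x a z.
  by move=> /eqP; exact: linked_away_locally_constant.
have Aa : [set~ x] a by exact/eqP.
by apply: (connected_locally_constant cx loc _ Aa (linked_away_refl ax) b); exact/eqP.
Qed.

Lemma component_away_near x a b : b != x -> linked_away x a b ->
  \forall w \near b & d \near (0 : R)^'+, connected_component (~` ball x d) a w.
Proof.
move=> bx [r r0 Arb]; have [s [V [s0 cV Vb Vs]]] := connected_nbhs_away bx.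
have Vcomp := component_away_glue Arb cV (nbhs_singleton Vb) Vs.
exists (V, [set d | d <= Num.min r s]).
  by split => //; apply: nbhs_right_ltW; rewrite lt_min r0 s0.
move=> [w d] [/= Vw dle]; apply: connected_componentS (Vcomp _ Vw).
exact: le_ballC.
Qed.

End metric_components.

Theorem lemma4p4 (R : realType) (T : metricType R) :
  peano_continuum T ->
  (forall p : T, ~ cut_point p) ->
  forall (x : T) (eps : R), 0 < eps ->
  exists delta : R, 0 < delta /\
    exists y : T,
      ~` ball x eps `<=` connected_component (~` ball x delta) y.
Proof.
move=> [cT _ lcT] nocut x eps eps0.
have [[a Ka]|K0] := pselect (exists a, (~` ball x eps) a); last first.
  by exists eps; split => //; exists x => z Kz; exfalso; apply: K0; exists z.
have ax := ballC_neq eps0 Ka.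
have cx : connected [set~ x] by rewrite -setTD; exact: contrapT (nocut x).
have Kc : compact (~` ball x eps).
  exact: subclosed_compact (closed_mballC x eps) cT (@subsetT _ _).
have K_near b : (~` ball x eps) b ->
    \forall w \near b & d \near (0 : R)^'+, connected_component (~` ball x d) a w.
  move=> Kb; have bx := ballC_neq eps0 Kb.
  exact: component_away_near lcT _ _ _ bx (linked_away_punctured lcT _ _ cx ax _ bx).
have K_uniform : \forall d \near (0 : R)^'+,
    ~` ball x eps `<=` connected_component (~` ball x d) a.
  exact: (compact_near_coveringP _).1 Kc _ _ _ _ K_near.
have [d [d0 Kd]] := filter_ex (filterI (nbhs_right_gt 0) K_uniform).
by exists d; split => //; exists a.
Qed.
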